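(* Let $\mathcal{E}$ be a Banach space of analytic functions on an annulus $\{r<|z|<R\}$ (with $0\le r<R\le\infty$) such that all evaluation functionals are continuous, and suppose $k_n\ne0$ for all $n\in\mathbb{Z}$. If $w=(w_n)_{n\in\mathbb{Z}}$ is a complex sequence such that $B_w$ is a bounded operator on $\mathcal{E}$, then $$\sup_{n\in\mathbb{Z}}\ |w_{n+1}|\frac{\|k_{n+1}\|}{\|k_n\|}<\infty.$$
   Context: For $f\in\mathcal{E}$ with Laurent expansion $f(z)=\sum_{n\in\mathbb{Z}}\widehat f(n)z^n$, $k_n(f)=\widehat f(n)$ is the $n$-th coefficient functional (a continuous linear functional on $\mathcal{E}$), and $\|k_n\|$ is its norm in $\mathcal{E}^*$. $B_w$ acts by $B_w(\sum_n\widehat f(n)z^n)=\sum_nw_n\widehat f(n)z^{n-1}$. *)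

From HB Require Import structures.
From mathcomp Require Import all_boot all_order all_algebra.
From mathcomp Require Import complex.
From mathcomp Require Import all_classical all_reals all_analysis.
Set Implicit Arguments. Unset Strict Implicit. Unset Printing Implicit Defensive.
Import Order.TTheory GRing.Theory Num.Theory ComplexField.
Import numFieldTopology.Exports numFieldNormedType.Exports.
Local Open Scope ring_scope.
Local Open Scope complex_scope.

(* We equip R[i] with its standard (norm) topology / normed-module structure
   over itself, exactly as MathComp-Analysis does for a generic numFieldType. *)
HB.instance Definition _ (R : rcfType) := GRing.ComAlgebra.copy R[i] R[i]^o.
HB.instance Definition _ (R : rcfType) := Vector.copy R[i] R[i]^o.
HB.instance Definition _ (R : rcfType) := NormedModule.copy R[i] R[i]^o.

Definition annulus (R : realType) (r : R) (Rb : \bar R) (z : R[i]) : Prop :=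
  (r%:C < `|z|) /\ (@Order.lt _ (\bar R) ((complex.Re `|z|)%:E) Rb).

Definition laurent_expansion (R : realType) (r : R) (Rb : \bar R)
    (g : R[i] -> R[i]) (c : int -> R[i]) : Prop :=
  forall z, annulus r Rb z ->
    let pos := fun n : nat => c (n%:Z) * z ^+ n in
    let neg := fun n : nat => c (- (n.+1%:Z)) * z ^- n.+1 in
    cvgn (series pos) /\ cvgn (series neg) /\
    g z = limn (series pos) + limn (series neg).

(* The Laurent coefficient sequence of g (0 if g has no Laurent expansion). *)
Definition laurent_coefs (R : realType) (r : R) (Rb : \bar R)
    (g : R[i] -> R[i]) : int -> R[i] :=
  match pselect (exists c, laurent_expansion r Rb g c) with
  | left h => proj1_sig (cid h)
  | right _ => fun _ => 0
  end.

(* n-th coefficient functional k_n(f) = \hat f(n). *)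
Definition coef_fun (R : realType) (r : R) (Rb : \bar R)
    (E : normedModType R[i]) (ev : E -> R[i] -> R[i]) (n : int) (f : E) : R[i] :=
  laurent_coefs r Rb (ev f) n.

Definition dual_norm (R : realType) (E : normedModType R[i]) (k : E -> R[i]) : R :=
  sup [set complex.Re (`|k f| / `|f|) | f in [set f : E | f != 0]].

From HB Require Import structures.
From mathcomp Require Import all_boot all_order all_algebra.
From mathcomp Require Import complex.
From mathcomp Require Import all_classical all_reals all_analysis.
Set Implicit Arguments. Unset Strict Implicit. Unset Printing Implicit Defensive.
Import Order.TTheory GRing.Theory Num.Theory ComplexField.
Import numFieldTopology.Exports numFieldNormedType.Exports.
Local Open Scope ring_scope.
Local Open Scope complex_scope.

(* For f <> 0 we have |w_(n+1)| |k_(n+1) f| = |k_n (B_w f)| <= ||k_n|| ||B_w|| ||f||,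
   hence |w_(n+1)| ||k_(n+1)|| <= ||B_w|| ||k_n|| for every n, and ||B_w|| bounds
   the supremum. *)

Section RealPartOfNorm.
Variable R : realType.

Lemma Re_normrE (V : normedModType R[i]) (x : V) : (complex.Re `|x|)%:C = `|x|.
Proof. by rewrite RRe_real // ger0_real. Qed.

Lemma Re_normr_ge0 (V : normedModType R[i]) (x : V) : 0 <= complex.Re `|x|.
Proof. by rewrite -lecR rmorph0 Re_normrE. Qed.

Lemma Re_normr_gt0 (V : normedModType R[i]) (x : V) : x != 0 -> 0 < complex.Re `|x|.
Proof. by rewrite -ltcR rmorph0 Re_normrE normr_gt0. Qed.

Lemma Re_normrM (x y : R[i]) : complex.Re `|x * y| = complex.Re `|x| * complex.Re `|y|.
Proof. by apply: complexI; rewrite rmorphM !Re_normrE normrM. Qed.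

Lemma continuous_linear_Re_normr_le (E F : normedModType R[i]) (T : {linear E -> F}) :
  continuous T -> exists2 C : R, 0 < C & forall x, complex.Re `|T x| <= C * complex.Re `|x|.
Proof.
move=> T_cont.
have /(linear_boundedP T).1 := continuous_linear_bounded 0 (T_cont 0).
move=> /pinfty_ex_gt0 [M M_gt0 TM]; have M_real : (complex.Re M)%:C = M.
  by rewrite RRe_real // gtr0_real.
exists (complex.Re M); first by rewrite -ltcR M_real.
move=> x; have := TM x.
by rewrite -M_real -[`|T x|]Re_normrE -[`|x|]Re_normrE -rmorphM lecR.
Qed.

End RealPartOfNorm.

Section DualNorm.
Variables (R : realType) (E : normedModType R[i]).
Implicit Type k : E -> R[i].

Lemma Re_normr_quot k f : complex.Re (`|k f| / `|f|) = complex.Re `|k f| / complex.Re `|f|.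
Proof. by rewrite -[`|k f|]Re_normrE -[`|f|]Re_normrE -fmorphV -rmorphM. Qed.

Lemma dual_norm_ge0 k : 0 <= dual_norm k.
Proof.
rewrite /dual_norm; set S := (X in sup X).
have [[[_ [f /= f_neq0 _]] S_ub]|/sup_out -> //] := pselect (has_sup S).
apply: le_trans (ub_le_sup S_ub _); last by exists f.
by rewrite Re_normr_quot divr_ge0 ?Re_normr_ge0.
Qed.

Lemma mulr_dual_norm_le k (a M : R) : 0 <= a -> 0 <= M ->
  (forall f, a * complex.Re `|k f| <= M * complex.Re `|f|) -> a * dual_norm k <= M.
Proof.
rewrite le_eqVlt => /predU1P[<- M_ge0 _|a_gt0 M_ge0 kM]; first by rewrite mul0r.
rewrite mulrC -ler_pdivlMr //; rewrite /dual_norm; set S := (X in sup X).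
have [->|S_neq0] := eqVneq S set0; first by rewrite sup0 divr_ge0 // ltW.
apply: ge_sup; first exact/set0P.
move=> _ [f /= f_neq0 <-]; rewrite Re_normr_quot ler_pdivrMr ?Re_normr_gt0 //.
by rewrite mulrAC ler_pdivlMr // mulrC.
Qed.

Lemma Re_normr_le_dual_norm k : linear k -> continuous k ->
  forall f, complex.Re `|k f| <= dual_norm k * complex.Re `|f|.
Proof.
move=> k_lin k_cont f.
pose kL : {linear E -> R[i]} := HB.pack k (GRing.isLinear.Build _ _ _ _ k k_lin).
have [->|f_neq0] := eqVneq f 0.
  by rewrite [k 0](linear0 kL) !normr0 mulr0.
have [C _ kC] := continuous_linear_Re_normr_le (T := kL) k_cont.
rewrite -ler_pdivrMr ?Re_normr_gt0 // -Re_normr_quot.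
apply: ub_le_sup; last by exists f.
exists C => _ [g /= g_neq0 <-].
by rewrite Re_normr_quot ler_pdivrMr ?Re_normr_gt0 //; apply: kC.
Qed.

End DualNorm.

Theorem proposition3p4 (R : realType) (r : R) (Rb : \bar R)
  (E : completeNormedModType R[i]) (ev : E -> R[i] -> R[i])
  (hr : 0 <= r) (hrR : (r%:E < Rb)%E)
  (* E is a space of functions on the annulus: pointwise linear structure *)
  (ev_lin : forall (a : R[i]) (f g : E) z, annulus r Rb z ->
              ev (a *: f + g) z = a * ev f z + ev g z)
  (ev_inj : forall f g : E, (forall z, annulus r Rb z -> ev f z = ev g z) -> f = g)
  (* every element of E is analytic on the annulus (has a Laurent expansion) *)
  (ev_an : forall f : E, exists c, laurent_expansion r Rb (ev f) c)
  (* evaluation functionals are continuous *)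
  (ev_cont : forall z, annulus r Rb z -> continuous (fun f : E => ev f z))
  (* k_n is a continuous linear functional (standing fact of the context) *)
  (k_lin : forall n (a : R[i]) (f g : E),
     coef_fun r Rb ev n (a *: f + g) = a * coef_fun r Rb ev n f + coef_fun r Rb ev n g)
  (k_cont : forall n, continuous (coef_fun r Rb ev n))
  (* k_n <> 0 for all n *)
  (k_nz : forall n : int, exists f : E, coef_fun r Rb ev n f != 0)
  (w : int -> R[i])
  (* B_w is a bounded operator on E *)
  (Bw : {linear E -> E}) (Bw_cont : continuous Bw)
  (Bw_def : forall (f : E) (n : int),
     coef_fun r Rb ev n (Bw f) = w (n + 1) * coef_fun r Rb ev (n + 1) f) :
  exists M : R, forall n : int,
    complex.Re `|w (n + 1)| * dual_norm (coef_fun r Rb ev (n + 1))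
      / dual_norm (coef_fun r Rb ev n) <= M.
Proof.
have [C C_gt0 BwC] := continuous_linear_Re_normr_le Bw_cont.
exists C => n; set kn := coef_fun r Rb ev n.
have := dual_norm_ge0 kn; rewrite le_eqVlt => /predU1P[<-|kn_gt0].
  by rewrite invr0 mulr0 ltW.
rewrite ler_pdivrMr //; apply: mulr_dual_norm_le => [||f].
- exact: Re_normr_ge0.
- by rewrite mulr_ge0 // ltW.
rewrite -Re_normrM -Bw_def.
apply: le_trans (Re_normr_le_dual_norm (k_lin n) (k_cont n) _) _.
by rewrite [C * _]mulrC -mulrA ler_wpM2l // ltW.
Qed.
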